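(* Let $(M,d)$ be a separable metric space, $(\Omega,\mathscr{F},\mathbb{P},\theta)$ an ergodic measure-preserving dynamical system, and $\{f_\omega\}_{\omega\in\Omega}$ a family of paracontraction maps $f_\omega\colon M\to M$ with $(\omega,x)\mapsto f_\omega(x)$ measurable, and let $\varphi(n,\omega,x)=f_{\theta^{n-1}(\omega)}\circ\cdots\circ f_\omega(x)$. Let $C_\varphi=\{x\in M\colon \mathbb{P}(\{\omega\colon f_\omega(x)=x\})=1\}$ and assume $C_\varphi\neq\emptyset$. Assume moreover that for each set $U$ in some countable basis of the topology of $M$, the set $\{\omega\colon f_\omega(x)\ne x\text{ for all }x\in U\}$ is measurable. Then every $\varphi$-invariant measure $\mu$ satisfies $\mu(\Omega\times C_\varphi)=1$.
   Context: A continuous map $f\colon M\to M$ is a paracontraction if for every fixed point $x$ of $f$ and every $y$ not fixed by $f$, $d(f(y),x)<d(y,x)$. The skew product induced by $\varphi$ is $F(\omega,x)=(\theta(\omega),f_\omega(x))$. A random measure is a probability measure on $\Omega\times M$ with first marginal $\mathbb{P}$; a $\varphi$-invariant measure is a random measure invariant under $F$. An ergodic measure-preserving dynamical system is a probability space with a measurable measure-preserving map $\theta$ such that every measurable $A$ with $\theta^{-1}(A)\subset A$ has measure $0$ or $1$. *)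

From HB Require Import structures.
From mathcomp Require Import all_boot all_order all_algebra.
From mathcomp Require Import all_classical all_reals all_analysis.
Set Implicit Arguments. Unset Strict Implicit. Unset Printing Implicit Defensive.
Import Order.TTheory GRing.Theory Num.Theory.
Local Open Scope classical_set_scope.
Local Open Scope ring_scope.

Definition is_metric {R : realType} {M : Type} (dist : M -> M -> R) : Prop :=
  [/\ forall x y, 0 <= dist x y,
      forall x y, dist x y = 0 <-> x = y,
      forall x y, dist x y = dist y x &
      forall x y z, dist x z <= dist x y + dist y z].

Definition metric_open {R : realType} {M : Type} (dist : M -> M -> R)
  (U : set M) : Prop :=
  forall x, U x -> exists2 e : R, 0 < e & forall y, dist x y < e -> U y.

Definition metric_separable {R : realType} {M : Type} (dist : M -> M -> R) : Prop :=
  exists D : set M, countable D /\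
    forall x (e : R), 0 < e -> exists2 q, D q & dist x q < e.

Definition metric_basis {R : realType} {M : Type} (dist : M -> M -> R)
  (B : set (set M)) : Prop :=
  (forall U, B U -> metric_open dist U) /\
  (forall U, metric_open dist U -> forall x, U x -> exists2 V, B V & V x /\ V `<=` U).

Definition metric_continuous {R : realType} {M : Type} (dist : M -> M -> R)
  (f : M -> M) : Prop :=
  forall x (e : R), 0 < e -> exists2 del : R, 0 < del &
    forall y, dist x y < del -> dist (f x) (f y) < e.

Definition paracontraction {R : realType} {M : Type} (dist : M -> M -> R)
  (f : M -> M) : Prop :=
  metric_continuous dist f /\
  forall x y, f x = x -> f y <> y -> dist (f y) x < dist y x.

Definition ergodic_mpds {dO : measure_display} {R : realType}
  {Omega : measurableType dO} (P : probability Omega R) (theta : Omega -> Omega) : Prop :=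
  [/\ measurable_fun setT theta,
      (forall A, measurable A -> P (theta @^-1` A) = P A) &
      (forall A, measurable A -> theta @^-1` A `<=` A ->
         P A = 0%E \/ P A = 1%E)].

Definition skew_product {Omega M : Type} (theta : Omega -> Omega)
  (f : Omega -> M -> M) (p : Omega * M) : Omega * M :=
  (theta p.1, f p.1 p.2).

Definition random_measure {dO dM : measure_display} {R : realType}
  {Omega : measurableType dO} {M : measurableType dM}
  (P : probability Omega R) (mu : probability (Omega * M)%type R) : Prop :=
  forall A, measurable A -> mu (A `*` setT) = P A.

Definition phi_invariant {dO dM : measure_display} {R : realType}
  {Omega : measurableType dO} {M : measurableType dM}
  (P : probability Omega R) (theta : Omega -> Omega) (f : Omega -> M -> M)
  (mu : probability (Omega * M)%type R) : Prop :=
  random_measure P mu /\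
  forall S, measurable S -> mu (skew_product theta f @^-1` S) = mu S.

Definition C_phi {dO : measure_display} {R : realType} {Omega : measurableType dO}
  {M : Type} (P : probability Omega R) (f : Omega -> M -> M) : set M :=
  [set x | P [set w | f w x = x] = 1%E].

From mathcomp Require Import all_boot all_order all_algebra.
From mathcomp Require Import all_classical all_reals all_analysis.
From mathcomp Require Import lra.
Import Order.TTheory GRing.Theory Num.Theory.
Local Open Scope classical_set_scope.
Local Open Scope ring_scope.

(* Let c be a point of C_phi, i.e. fixed by almost every f_w.  Paracontractions never
   increase the distance to their fixed points, so each cylinder
   Omega x {d(., c) <= r} is (up to a null set) mapped into itself by the skew product
   F; since F preserves mu, the part of F^-1 of such a cylinder lying outside it is
   also null.  Letting r range over the rationals, mu-almost every (w, x) satisfies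
   f_w x = x, and by invariance the same holds along the whole theta-orbit of w.
   Now take a basis set U and let E_U be the set of w whose theta-orbit meets
   {w | f_w has no fixed point in U}.  E_U is backward invariant, hence has
   probability 0 or 1 by ergodicity; if it is 1, the cylinder Omega x U is mu-null.
   Points of C_phi lie in no such U, while for any other point x some basis set U
   around x has P(E_U) = 1 (continuity of f_w at x).  Hence C_phi is the complement
   of the open set W covered by the U with P(E_U) = 1, and Omega x W is a countable
   union of mu-null cylinders.  Separability is only used through the countable
   basis, which the statement provides explicitly. *)

Lemma preimage_measurable {d d'} {T : measurableType d} {T' : measurableType d'}
    {g : T -> T'} {S : set T'} :
  measurable_fun setT g -> measurable S -> measurable (g @^-1` S).
Proof. by move=> mg mS; rewrite -[X in measurable X]setTI; exact: mg. Qed.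

Lemma iter_measurable {d} {T : measurableType d} {g : T -> T} n :
  measurable_fun setT g -> measurable_fun setT (iter n g).
Proof.
move=> mg; elim: n => [|n IHn] /=; first exact: measurable_id.
exact: measurableT_comp mg IHn.
Qed.

Section measure_preserving.
Context {d} {T : measurableType d} {R : realType}.
Context {mu : {measure set T -> \bar R}} {g : T -> T}.
Hypothesis mg : measurable_fun setT g.
Hypothesis g_preserves : forall S, measurable S -> mu (g @^-1` S) = mu S.

Lemma iter_preserves n S : measurable S -> mu (iter n g @^-1` S) = mu S.
Proof.
elim: n S => [//|n IHn] S mS.
rewrite (_ : iter n.+1 g @^-1` S = iter n g @^-1` (g @^-1` S)) //.
by rewrite IHn ?g_preserves //; exact: preimage_measurable.
Qed.

Lemma negligible_iter_preimage n N :
  mu.-negligible N -> mu.-negligible (iter n g @^-1` N).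
Proof.
move=> [Z [mZ Z0 NZ]]; exists (iter n g @^-1` Z); split.
- exact: preimage_measurable (iter_measurable n mg) _.
- by rewrite iter_preserves.
- by move=> x /NZ.
Qed.

End measure_preserving.

(* For a finite measure preserved by g, if L loses only a null part under g^-1
   then g^-1 L exceeds L only by a null part: both sets have the same measure. *)
Lemma preserving_leak_null {d} {T : measurableType d} {R : realType}
    {mu : {finite_measure set T -> \bar R}} {g : T -> T} {L : set T} :
  measurable_fun setT g -> (forall S, measurable S -> mu (g @^-1` S) = mu S) ->
  measurable L -> mu (L `\` g @^-1` L) = 0%E -> mu (g @^-1` L `\` L) = 0%E.
Proof.
move=> mg g_preserves mL leak0.
have mgL : measurable (g @^-1` L) by exact: preimage_measurable.
have fin : mu (g @^-1` L `&` L) \is a fin_num.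
  by apply: fin_num_measure; exact: measurableI.
have splitL : mu L = mu (L `\` g @^-1` L) + mu (L `&` g @^-1` L).
  exact: measureDI.
have splitgL : mu (g @^-1` L) = mu (g @^-1` L `\` L) + mu (g @^-1` L `&` L).
  exact: measureDI.
rewrite g_preserves // splitL leak0 add0e setIC in splitgL.
by rewrite -[LHS](addeK _ fin) -splitgL subee.
Qed.

(* A countably indexed union of null sets is null (the library provides only the
   nat-indexed case; we reindex by an injection into nat). *)
Lemma negligible_bigcup_countable d (T : measurableType d) (R : realType)
    (mu : {measure set T -> \bar R}) (I : Type) (D : set I) (F : I -> set T) :
  countable D -> (forall i, D i -> mu.-negligible (F i)) ->
  mu.-negligible (\bigcup_(i in D) F i).
Proof.
move=> /countable_injP[code code_inj] negF.
pose G n := \bigcup_(i in [set i | D i /\ code i = n]) F i.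
apply: (@negligibleS _ _ _ mu (\bigcup_n G n)).
  by move=> x [i Di Fix]; exists (code i) => //; exists i.
apply: negligible_bigcup => n.
have [[i0 [Di0 ci0]]|none] := pselect (exists i, D i /\ code i = n).
  apply: negligibleS (negF i0 Di0) => x [i [Di ci] Fix].
  by rewrite -(code_inj i i0) ?inE // ci ci0.
apply: negligibleS (negligible_set0 mu) => x [i [Di ci] _]; apply: none.
by exists i.
Qed.

Definition orbit_hitting {Omega : Type} (theta : Omega -> Omega) (A : set Omega) :
  set Omega := \bigcup_k (iter k theta @^-1` A).

Section ergodic_orbits.
Context {dO} {Omega : measurableType dO} {R : realType}.
Context {P : probability Omega R} {theta : Omega -> Omega}.
Hypothesis theta_ergodic : ergodic_mpds P theta.

Lemma orbit_hitting_measurable A :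
  measurable A -> measurable (orbit_hitting theta A).
Proof.
case: theta_ergodic => mtheta _ _ mA.
by apply: bigcupT_measurable => k; exact: preimage_measurable (iter_measurable _ _) _.
Qed.

(* The orbit-hitting set is backward invariant, so ergodicity forces a 0-1 law. *)
Lemma orbit_hitting_01 A : measurable A ->
  P (orbit_hitting theta A) = 0%E \/ P (orbit_hitting theta A) = 1%E.
Proof.
move=> mA; case: theta_ergodic => _ _; apply; first exact: orbit_hitting_measurable.
move=> w [k _ hit]; exists k.+1 => //.
by change (A (iter k.+1 theta w)); rewrite iterSr.
Qed.

Lemma orbit_hitting_negligible A :
  P.-negligible A -> P.-negligible (orbit_hitting theta A).
Proof.
case: theta_ergodic => mtheta theta_preserves _ negA.
by apply: negligible_bigcup => k; exact: negligible_iter_preimage.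
Qed.

End ergodic_orbits.

Section metric.
Context {R : realType} {M : Type} {dist : M -> M -> R}.
Hypothesis dist_metric : is_metric dist.

Lemma metric_open_ball x r : metric_open dist [set y | dist x y < r].
Proof.
case: dist_metric => _ _ _ dtri z xz; exists (r - dist x z); first by rewrite subr_gt0.
by move=> y zy /=; have := dtri x z y; lra.
Qed.

Lemma metric_open_far c r : metric_open dist [set x | r < dist x c].
Proof.
case: dist_metric => _ _ _ dtri y ry; exists (dist y c - r); first by rewrite subr_gt0.
by move=> z yz /=; have := dtri y z c; lra.
Qed.

(* A continuous map moving x has no fixed point on some basic neighbourhood of x:
   take a ball around x of radius less than half of dist (g x) x. *)
Lemma basis_nonfixed_nbhs {B : set (set M)} {g : M -> M} {x : M} :
  metric_basis dist B -> metric_continuous dist g -> g x <> x ->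
  exists2 V, B V & V x /\ forall y, V y -> g y <> y.
Proof.
case: dist_metric => d0 deq dsym dtri [_ basis] gcont gx.
set e := dist (g x) x.
have e0 : 0 < e by rewrite lt_neqAle d0 andbT eq_sym; apply/eqP => /deq.
have [del del0 hdel] := gcont x (e / 2) (divr_gt0 e0 (ltr0Sn _ 1)).
pose r := Num.min del (e / 2).
have r0 : 0 < r by rewrite lt_min del0 divr_gt0.
have x_ball : dist x x < r by rewrite (deq x x).2.
have [V BV [Vx Vball]] := basis _ (metric_open_ball x r) x x_ball.
exists V => //; split => // y Vy gy.
have /= := Vball y Vy; rewrite lt_min => /andP[xy_del xy_e].
have := hdel y xy_del; rewrite gy => gxy.
by have := dtri (g x) y x; rewrite (dsym y x) -/e; lra.
Qed.

End metric.

Lemma paracontraction_fixed_nonexpansive {R : realType} {M : Type}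
    {dist : M -> M -> R} {g : M -> M} {c : M} (x : M) :
  paracontraction dist g -> g c = c -> dist (g x) c <= dist x c.
Proof.
move=> [_ strict] gc; have [-> //|gx] := pselect (g x = x).
exact/ltW/strict.
Qed.

Definition fixed_point_free {Omega M : Type} (f : Omega -> M -> M) (U : set M) :
  set Omega := [set w | forall x, U x -> f w x <> x].

(* The union of the basis sets U such that almost every orbit enters
   fixed_point_free f U; it turns out to be the complement of C_phi. *)
Definition full_hitting_region {dO} {Omega : measurableType dO} {R : realType}
    {M : Type} (P : probability Omega R) (theta : Omega -> Omega)
    (f : Omega -> M -> M) (B : set (set M)) : set M :=
  \bigcup_(U in [set U | B U /\ P (orbit_hitting theta (fixed_point_free f U)) = 1%E])
    U.

Section paracontracting_cocycle.
Context {R : realType} {dO : measure_display} {Omega : measurableType dO}.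
Context {dM : measure_display} {M : measurableType dM}.
Context {P : probability Omega R} {theta : Omega -> Omega}.
Context {dist : M -> M -> R} {f : Omega -> M -> M}.
Hypothesis dist_metric : is_metric dist.
Hypothesis borel_M : (@measurable dM M) = <<s metric_open dist >>.
Hypothesis theta_ergodic : ergodic_mpds P theta.
Hypothesis f_para : forall w, paracontraction dist (f w).
Hypothesis f_measurable : measurable_fun setT (fun p : Omega * M => f p.1 p.2).

Local Notation F := (skew_product theta f).

Lemma metric_open_measurable U : metric_open dist U -> measurable U.
Proof. by rewrite borel_M; exact: sub_sigma_algebra. Qed.

(* {w | f w x = x} is measurable: it is the preimage of the closed set {x}. *)
Lemma fixing_set_measurable x : measurable [set w | f w x = x].
Proof.
have mfx : measurable_fun setT (fun w => f w x) := measurable_fun_pair1 x f_measurable.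
suff mx : measurable [set x] by exact: preimage_measurable mfx mx.
rewrite -(setCK [set x]); apply/measurableC/metric_open_measurable.
rewrite (_ : ~` [set x] = [set y | 0 < dist y x]); first exact: metric_open_far.
case: dist_metric => d0 deq _ _; apply/seteqP; split => y /=.
  by move=> yx; rewrite lt_neqAle d0 andbT eq_sym; apply/eqP => /deq.
by move=> + yx; rewrite (deq y x).2 // ltxx.
Qed.

Lemma skew_product_measurable : measurable_fun setT F.
Proof.
case: theta_ergodic => mtheta _ _.
by apply: measurable_fun_pair => //=; exact: measurableT_comp mtheta measurable_fst.
Qed.

Context {mu : probability (Omega * M)%type R}.
Hypothesis mu_invariant : phi_invariant P theta f mu.

Lemma marginal_null_complement (A : set Omega) :
  measurable A -> P A = 1%E -> mu (~` A `*` setT) = 0%E.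
Proof.
move=> mA PA; case: mu_invariant => marginal _.
by rewrite marginal; [rewrite probability_setC // PA subee | exact: measurableC].
Qed.

Lemma sublevel_measurable c r : measurable [set x | dist x c <= r].
Proof.
rewrite -(setCK [set x | _]); apply/measurableC/metric_open_measurable.
rewrite (_ : ~` _ = [set x | r < dist x c]); first exact: metric_open_far.
by apply/seteqP; split => x /=; rewrite ltNge => /negP.
Qed.

(* For c in C_phi, the cylinder L over a closed ball around c is almost mapped into
   itself by F; by invariance, F^-1 L \ L is null too. *)
Lemma sublevel_leak_null c r : C_phi P f c ->
  let L := [set: Omega] `*` [set x | dist x c <= r] in
  mu (F @^-1` L `\` L) = 0%E.
Proof.
move=> Cc L; case: mu_invariant => _ invariant.
have mL : measurable L by apply: measurableX => //; exact: sublevel_measurable.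
have mNc : measurable (~` [set w | f w c = c] `*` @setT M).
  by apply: measurableX => //; exact/measurableC/fixing_set_measurable.
apply: (preserving_leak_null skew_product_measurable invariant mL).
apply/eqP; rewrite -measure_le0.
rewrite -(marginal_null_complement _ (fixing_set_measurable c) Cc).
apply: le_measure; rewrite ?inE //.
  by apply: measurableD => //; exact: preimage_measurable skew_product_measurable mL.
move=> [w x] [[_ /= xc] notFL]; split => //= fc; apply: notFL; split => //=.
exact: le_trans (paracontraction_fixed_nonexpansive x (f_para w) fc) xc.
Qed.

Hypothesis C_phi_nonempty : C_phi P f !=set0.

(* mu-almost every (w, x) has f w x = x: otherwise the distance to a point c of C_phi
   drops strictly, and (w, x) lies in F^-1 L \ L for a ball L of rational radius. *)
Lemma invariant_fixes_ae : mu.-negligible [set p | f p.1 p.2 <> p.2].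
Proof.
have [c Cc] := C_phi_nonempty.
pose L (q : rat) := [set: Omega] `*` [set x | dist x c <= ratr q].
apply: (@negligibleS _ _ _ mu ((~` [set w | f w c = c] `*` setT) `|`
    \bigcup_(q in [set: rat]) (F @^-1` L q `\` L q))).
  move=> [w x] /= fx; have [fc|] := pselect (f w c = c); last by left.
  have [q] := rat_in_itvoo ((f_para w).2 c x fc fx); rewrite in_itv /= => /andP[xq qc].
  right; exists q => //; split; first by split => //=; exact: ltW.
  by move=> [_ /= /(lt_le_trans qc)]; rewrite ltxx.
apply: negligibleU.
  apply/negligibleP.
    by apply: measurableX => //; exact/measurableC/fixing_set_measurable.
  exact: marginal_null_complement _ (fixing_set_measurable c) Cc.
apply: negligible_bigcup_countable => // q _.
apply/negligibleP; last exact: sublevel_leak_null.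
apply: measurableD; last by apply: measurableX => //; exact: sublevel_measurable.
apply: preimage_measurable skew_product_measurable _.
by apply: measurableX => //; exact: sublevel_measurable.
Qed.

(* By invariance, mu-almost every (w, x) has x fixed by f at every point of the
   theta-orbit of w (the F-orbit of (w, x) then stays in the fibre of x). *)
Lemma orbit_fixed_ae :
  mu.-negligible [set p | exists n, f (iter n theta p.1) p.2 <> p.2].
Proof.
pose N := [set p : Omega * M | f p.1 p.2 <> p.2].
case: mu_invariant => _ invariant.
apply: (@negligibleS _ _ _ mu (\bigcup_k (iter k F @^-1` N))); last first.
  apply: negligible_bigcup => k.
  exact: negligible_iter_preimage skew_product_measurable invariant k _
    invariant_fixes_ae.
move=> [w x] /= [n moved].
have [[k Nk]|nohit] := pselect (exists k, N (iter k F (w, x))); first by exists k.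
have stays k : ~ N (iter k F (w, x)) by move=> Nk; apply: nohit; exists k.
have orbit k : iter k F (w, x) = (iter k theta w, x).
  elim: k => [//|k IHk] /=; rewrite IHk /skew_product /=; congr pair.
  by apply: contrapT; have := stays k; rewrite IHk.
by exfalso; apply: moved; apply: contrapT; have := stays n; rewrite orbit.
Qed.

Variable B : set (set M).
Hypothesis B_countable : countable B.
Hypothesis B_basis : metric_basis dist B.
Hypothesis B_fixed_point_free : forall U, B U -> measurable (fixed_point_free f U).

Local Notation E U := (orbit_hitting theta (fixed_point_free f U)).

Lemma hitting_measurable U : B U -> measurable (E U).
Proof.
by move=> BU; exact: orbit_hitting_measurable theta_ergodic _ (B_fixed_point_free U BU).
Qed.

(* If almost every orbit enters fixed_point_free f U, then the cylinder over U is
   mu-null: a.e. point of it has x fixed along the orbit, so w avoids E U. *)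
Lemma full_hitting_cylinder_null U : B U -> P (E U) = 1%E ->
  mu.-negligible ([set: Omega] `*` U).
Proof.
move=> BU EU1.
apply: (@negligibleS _ _ _ mu ([set p | exists n, f (iter n theta p.1) p.2 <> p.2]
    `|` (~` E U `*` setT))); last first.
  apply: negligibleU; first exact: orbit_fixed_ae.
  apply/negligibleP.
    by apply: measurableX => //; exact/measurableC/hitting_measurable.
  exact: marginal_null_complement _ (hitting_measurable U BU) EU1.
move=> [w x] [_ /= Ux].
have [moved|fixed] := pselect (exists n, f (iter n theta w) x <> x); first by left.
right; split => //= -[k _ free]; apply: (free x Ux); apply: contrapT => moved.
by apply: fixed; exists k.
Qed.

(* For x in C_phi and U containing x, orbits a.s. never reach a w with f w x <> x,
   so E U is null. *)
Lemma C_phi_hitting_null x U : C_phi P f x -> B U -> U x -> P (E U) = 0%E.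
Proof.
move=> Cx BU Ux; apply: measure_negligible; first exact: hitting_measurable.
have mNx : measurable (~` [set w | f w x = x]).
  exact/measurableC/fixing_set_measurable.
have Nx0 : P (~` [set w | f w x = x]) = 0%E.
  by rewrite probability_setC ?Cx ?subee //; exact: fixing_set_measurable.
apply: (@negligibleS _ _ _ P (orbit_hitting theta (~` [set w | f w x = x]))).
  by move=> w [k _ free]; exists k => //; exact: free x Ux.
by apply: orbit_hitting_negligible theta_ergodic _ _; exact/negligibleP.
Qed.

(* Conversely, if E U is null for every basis set U around x, then x is in C_phi:
   by continuity, each w moving x lies in such an E U (with k = 0). *)
Lemma C_phi_of_hitting_null x :
  (forall U, B U -> U x -> P (E U) = 0%E) -> C_phi P f x.
Proof.
move=> hitting_null.
have mNx : measurable (~` [set w | f w x = x]).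
  exact/measurableC/fixing_set_measurable.
suff /negligibleP Nx0 : P.-negligible (~` [set w | f w x = x]).
  by rewrite /C_phi /= -[X in P X]setCK probability_setC // Nx0 // sube0.
have cBx : countable [set U | B U /\ U x].
  by apply: sub_countable B_countable; apply: subset_card_le => U [].
apply: (@negligibleS _ _ _ P (\bigcup_(U in [set U | B U /\ U x]) E U)).
  move=> w /= fx; have [V BV [Vx free]] :=
    basis_nonfixed_nbhs dist_metric B_basis (f_para w).1 fx.
  by exists V => //; exists 0%N.
apply: negligible_bigcup_countable cBx _ => U [BU Ux].
by apply/negligibleP; [exact: hitting_measurable | exact: hitting_null].
Qed.

Local Notation W := (full_hitting_region P theta f B).

(* By the 0-1 law, C_phi is exactly the complement of the full hitting region. *)
Lemma C_phi_complement : C_phi P f = ~` W.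
Proof.
apply/seteqP; split => x.
  move=> Cx [U [BU EU1] Ux]; have := C_phi_hitting_null x U Cx BU Ux.
  by rewrite EU1 => /eqP; rewrite onee_eq0.
move=> notW; apply: C_phi_of_hitting_null => U BU Ux.
have [//|EU1] := orbit_hitting_01 theta_ergodic _ (B_fixed_point_free U BU).
by case: notW; exists U.
Qed.

Lemma full_hitting_region_open : metric_open dist W.
Proof.
move=> x [U [BU EU1] Ux]; have [e e0 ball] := B_basis.1 U BU x Ux.
by exists e => // y /ball Uy; exists U.
Qed.

Lemma full_hitting_region_null : mu.-negligible ([set: Omega] `*` W).
Proof.
have cB1 : countable [set U | B U /\ P (E U) = 1%E].
  by apply: sub_countable B_countable; apply: subset_card_le => U [].
apply: (@negligibleS _ _ _ mu (\bigcup_(U in [set U | B U /\ P (E U) = 1%E])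
    ([set: Omega] `*` U))).
  by move=> [w x] [_ [U hU Ux]]; exists U.
apply: negligible_bigcup_countable cB1 _ => U [BU EU1].
exact: full_hitting_cylinder_null.
Qed.

End paracontracting_cocycle.

Theorem mainTheorem7 (R : realType)
  (dO : measure_display) (Omega : measurableType dO) (P : probability Omega R)
  (theta : Omega -> Omega)
  (dM : measure_display) (M : measurableType dM) (dist : M -> M -> R)
  (f : Omega -> M -> M) :
  is_metric dist ->
  metric_separable dist ->
  (@measurable dM M) = <<s metric_open dist >> ->
  ergodic_mpds P theta ->
  (forall w, paracontraction dist (f w)) ->
  measurable_fun setT (fun p : Omega * M => f p.1 p.2) ->
  C_phi P f !=set0 ->
  (exists B : set (set M), [/\ countable B, metric_basis dist B &
     forall U, B U -> measurable [set w | forall x, U x -> f w x <> x]]) ->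
  forall mu : probability (Omega * M)%type R,
    phi_invariant P theta f mu ->
    mu (setT `*` C_phi P f) = 1%E.
Proof.
move=> dist_metric _ borel_M theta_ergodic f_para f_measurable C_phi_nonempty
  [B [B_countable B_basis B_fixed_point_free]] mu mu_invariant.
have W_open : metric_open dist (full_hitting_region P theta f B).
  exact: full_hitting_region_open B_basis.
have mW : measurable ([set: Omega] `*` full_hitting_region P theta f B).
  by apply: measurableX => //; exact: metric_open_measurable borel_M _ W_open.
have W_null := full_hitting_region_null dist_metric borel_M theta_ergodic f_para
  f_measurable mu_invariant C_phi_nonempty B B_countable B_fixed_point_free.
have CW := C_phi_complement dist_metric borel_M theta_ergodic f_para f_measurable
  B B_countable B_basis B_fixed_point_free.
have -> : [set: Omega] `*` C_phi P f =
    ~` ([set: Omega] `*` full_hitting_region P theta f B).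
  rewrite CW; apply/seteqP; split => -[w x] /=; first by move=> [_ notW] [_].
  by move=> notTW; split => // Wx; exact: notTW.
by rewrite probability_setC // (measure_negligible mW W_null) sube0.
Qed.
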